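(* Let $L>0$, $h_{min}>0$, $\mu_1>0$, $\mu_2>0$, and define $\tilde g(x)=x^2+h_{min}^2$ and $\tilde f(x)=(x^2+h_{min}^2)\big((x-L)^2+h_{min}^2\big)$. Consider $$\max_{x\in[0,L]}\ \min\left\{\frac{\mu_1}{\tilde g(x)},\ \frac{\mu_2\,\tilde g(x)}{\tilde f(x)}\right\}.$$ Let $\nu=\frac{h_{min}^2}{L^2+h_{min}^2}$ and, when $\mu_1\ne\mu_2$, $k=\frac{\mu_1}{\mu_1-\mu_2}$. Then the problem has a unique maximizer $x^*$, given by $$x^*=\begin{cases}0,& \mu_1\le \nu\mu_2,\\ L,& \mu_1\ge \mu_2/\nu,\\ \frac{L}{2},& \mu_1=\mu_2,\\ kL+\sqrt{k^2L^2-kL^2-h_{min}^2},& \nu\mu_2<\mu_1<\mu_2,\\ kL-\sqrt{k^2L^2-kL^2-h_{min}^2},& \mu_2<\mu_1<\mu_2/\nu.\end{cases}$$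
   Context: This is the reduced UAV placement problem for a decode-and-forward full-duplex relay (source at $(0,0,0)$, destination at $(L,0,0)$, UAV at $(x,0,h_{min})$); in the paper $\mu_1=\frac{p_S}{\rho p_R+\sigma^2}$ and $\mu_2=\frac{Np_R}{\sigma^2}$, but only $\mu_1,\mu_2>0$ is needed. *)

From mathcomp Require Import all_boot all_order all_algebra.
From mathcomp Require Import reals.
Set Implicit Arguments. Unset Strict Implicit. Unset Printing Implicit Defensive.
Import Order.TTheory GRing.Theory Num.Theory.
Local Open Scope ring_scope.

Definition gt (R : realType) (h x : R) : R := x ^+ 2 + h ^+ 2.

Definition ft (R : realType) (L h x : R) : R :=
  (x ^+ 2 + h ^+ 2) * ((x - L) ^+ 2 + h ^+ 2).

Definition obj (R : realType) (L h mu1 mu2 x : R) : R :=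
  Num.min (mu1 / gt h x) (mu2 * gt h x / ft L h x).

Definition unique_maximizer (R : realType) (F : R -> R) (L xs : R) : Prop :=
  [/\ 0 <= xs <= L,
      (forall x, 0 <= x <= L -> F x <= F xs) &
      (forall y, 0 <= y <= L -> (forall x, 0 <= x <= L -> F x <= F y) -> y = xs)].

From mathcomp Require Import all_boot all_order all_algebra.
From mathcomp Require Import reals ring lra.
Import Order.TTheory GRing.Theory Num.Theory.
Local Open Scope ring_scope.

(* Since f~(x) = g~(x) g~(x - L), the objective is min (mu1 / g~(x), mu2 / g~(x - L)):
   the minimum of a strictly decreasing and a strictly increasing function on [0, L].
   Such a minimum is uniquely maximised where the two branches cross or, when they do not
   cross, at the end of [0, L] where the smaller branch peaks.  Cross-multiplying, the
   branches cross where phi(x) = mu1 g~(x - L) - mu2 g~(x) vanishes; phi(0) > 0 > phi(L)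
   exactly in the interior regime nu mu2 < mu1 < mu2 / nu, and for mu1 <> mu2 the quadratic
   phi factors as (mu1 - mu2) ((x - k L)^2 - D) with D = k^2 L^2 - k L^2 - h^2, whose root
   in [0, L] is k L + sqrt D or k L - sqrt D according to the sign of mu1 - mu2. *)

Section MinOfMonotone.
Variables (R : realType) (L : R) (F f g : R -> R).
Hypothesis F_min : forall x, 0 <= x <= L -> F x = Num.min (f x) (g x).
Hypothesis f_decr : forall x y, 0 <= x -> x < y -> y <= L -> f y < f x.
Hypothesis g_incr : forall x y, 0 <= x -> x < y -> y <= L -> g x < g y.

Lemma min_monotone_unique_maximizer xs : 0 <= xs <= L ->
  (0 < xs -> g xs <= f xs) -> (xs < L -> f xs <= g xs) ->
  unique_maximizer F L xs.
Proof.
move=> /[dup] xsI /andP[xs0 xsL] gf fg.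
have strict x : 0 <= x <= L -> x != xs -> F x < F xs.
  move=> /[dup] xI /andP[x0 xL] nx; rewrite !F_min //.
  case: (ltgtP x xs) nx => // lt_x _.
  - rewrite (min_r (gf (le_lt_trans x0 lt_x))).
    by rewrite gt_min (g_incr _ _ x0 lt_x xsL) orbT.
  - rewrite (min_l (fg (lt_le_trans lt_x xL))).
    by rewrite gt_min (f_decr _ _ xs0 lt_x xL).
split=> // [x xI | y yI ymax].
  by have [->//|nx] := eqVneq x xs; exact/ltW/strict.
apply/eqP; apply: contraTT (ymax xs xsI) => ny.
by rewrite -ltNge strict.
Qed.

End MinOfMonotone.

Lemma sqrt_root_between [R : rcfType] [c D L : R] :
  0 < L -> c ^+ 2 < D -> D < (L - c) ^+ 2 -> 0 < c + Num.sqrt D < L.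
Proof.
move=> L0 cD DL; set s := Num.sqrt D.
have s0 : 0 <= s := sqrtr_ge0 D.
have s2 : s ^+ 2 = D by apply/sqr_sqrtr/(le_trans (sqr_ge0 c))/ltW.
have /ltr_normlP[cs sc] : `|c| < s.
  by rewrite -ltr_sqr ?nnegrE // real_normK ?num_real ?s2.
have cL : c < L by nra.
have Lcs : s < L - c by rewrite -ltr_sqr ?nnegrE ?s2 //; lra.
by apply/andP; split; lra.
Qed.

Lemma sqrt_root_between_rev [R : rcfType] [c D L : R] :
  0 < L -> (L - c) ^+ 2 < D -> D < c ^+ 2 -> 0 < c - Num.sqrt D < L.
Proof.
move=> L0 cD DL; have := sqrt_root_between L0 cD.
by rewrite opprB addrC subrK => /(_ DL) /andP[]; lra.
Qed.

Lemma ltr_pdiv2l [R : realFieldType] (mu a b : R) :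
  0 < mu -> 0 < a -> a < b -> mu / b < mu / a.
Proof. by move=> mu0 a0 ab; rewrite ltr_pM2l // ltf_pV2 // posrE; lra. Qed.

Section Objective.
Variables (R : realType) (h : R).
Hypothesis h_gt0 : 0 < h.

Lemma gt_gt0 x : 0 < gt h x.
Proof. exact: ltr_wpDl (sqr_ge0 x) (exprn_gt0 2 h_gt0). Qed.

Lemma gtN x : gt h (- x) = gt h x.
Proof. by rewrite /gt sqrrN. Qed.

Lemma gt_nneg_incr x y : 0 <= x -> x < y -> gt h x < gt h y.
Proof. by move=> x0 xy; rewrite ltrD2r ltr_pXn2r ?nnegrE //; lra. Qed.

Variables (L mu1 mu2 : R).
Hypotheses (L_gt0 : 0 < L) (mu1_gt0 : 0 < mu1) (mu2_gt0 : 0 < mu2).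

Lemma objE x : obj L h mu1 mu2 x = Num.min (mu1 / gt h x) (mu2 / gt h (x - L)).
Proof.
rewrite /obj /ft -/(gt h x) -/(gt h (x - L)); congr Num.min.
by field; rewrite !gt_eqF ?gt_gt0.
Qed.

Lemma obj_unique_maximizer xs : 0 <= xs <= L ->
  (0 < xs -> mu2 * gt h xs <= mu1 * gt h (xs - L)) ->
  (xs < L -> mu1 * gt h (xs - L) <= mu2 * gt h xs) ->
  unique_maximizer (obj L h mu1 mu2) L xs.
Proof.
have cross (a b c d : R) : 0 < c -> 0 < d -> a * d <= b * c -> a / c <= b / d.
  by move=> c0 d0 le_ad; rewrite ler_pdivrMr // mulrAC ler_pdivlMr.
move=> xsI gf fg.
apply: (@min_monotone_unique_maximizer _ _ _
          (fun x => mu1 / gt h x) (fun x => mu2 / gt h (x - L))) => //.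
- by move=> x _; rewrite objE.
- by move=> x y x0 xy _; apply: ltr_pdiv2l => //; [apply: gt_gt0 | apply: gt_nneg_incr].
- move=> x y _ xy yL; rewrite -[x - L]opprB -[y - L]opprB !gtN.
  by apply: ltr_pdiv2l => //; [apply: gt_gt0 | apply: gt_nneg_incr; lra].
- by move=> /gf; apply: cross; apply: gt_gt0.
- by move=> /fg; apply: cross; apply: gt_gt0.
Qed.

Lemma obj_crossing_unique_maximizer xs : 0 <= xs <= L ->
  mu1 * gt h (xs - L) = mu2 * gt h xs -> unique_maximizer (obj L h mu1 mu2) L xs.
Proof. by move=> xsI cross; apply: obj_unique_maximizer => // _; rewrite cross. Qed.

Lemma gt_zeroE : gt h 0 = h ^+ 2.
Proof. by rewrite /gt expr0n add0r. Qed.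

Lemma le_nu_mulE :
  (mu1 <= h ^+ 2 / (L ^+ 2 + h ^+ 2) * mu2) = (mu1 * gt h L <= mu2 * gt h 0).
Proof.
rewrite -[L ^+ 2 + h ^+ 2]/(gt h L) -(ler_pM2r (gt_gt0 L)).
rewrite mulrAC divfK ?gt_eqF ?gt_gt0 //.
by rewrite gt_zeroE [mu2 * _]mulrC.
Qed.

Lemma le_div_nuE :
  (mu2 / (h ^+ 2 / (L ^+ 2 + h ^+ 2)) <= mu1) = (mu2 * gt h L <= mu1 * gt h 0).
Proof.
by rewrite -[L ^+ 2 + h ^+ 2]/(gt h L) -gt_zeroE invf_div mulrA ler_pdivrMr ?gt_gt0.
Qed.

Lemma obj_unique_maximizer_left : mu1 * gt h L <= mu2 * gt h 0 ->
  unique_maximizer (obj L h mu1 mu2) L 0.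
Proof.
move=> le_mu; apply: obj_unique_maximizer => [||].
- by rewrite lexx ltW.
- by rewrite ltxx.
- by rewrite sub0r gtN.
Qed.

Lemma obj_unique_maximizer_right : mu2 * gt h L <= mu1 * gt h 0 ->
  unique_maximizer (obj L h mu1 mu2) L L.
Proof.
move=> le_mu; apply: obj_unique_maximizer => [||].
- by rewrite lexx ltW.
- by rewrite subrr.
- by rewrite ltxx.
Qed.

Lemma obj_unique_maximizer_mid : mu1 = mu2 -> unique_maximizer (obj L h mu1 mu2) L (L / 2).
Proof.
move=> eq_mu; apply: obj_crossing_unique_maximizer.
  by rewrite divr_ge0 ?ler_pdivrMr ?ltW // ltr_pMr // ltr1n.
by rewrite eq_mu /gt; field.
Qed.

Let k := mu1 / (mu1 - mu2).
Let D := k ^+ 2 * L ^+ 2 - k * L ^+ 2 - h ^+ 2.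

Lemma crossing_factor x : mu1 != mu2 ->
  mu1 * gt h (x - L) - mu2 * gt h x = (mu1 - mu2) * ((x - k * L) ^+ 2 - D).
Proof. by move=> neq_mu; rewrite /D /k /gt; field; rewrite subr_eq0. Qed.

Lemma obj_unique_maximizer_lt : mu1 < mu2 ->
  mu2 * gt h 0 < mu1 * gt h L -> mu1 * gt h 0 < mu2 * gt h L ->
  unique_maximizer (obj L h mu1 mu2) L (k * L + Num.sqrt D).
Proof.
move=> lt_mu phi0 phiL; have neq_mu : mu1 != mu2 by rewrite lt_eqF.
have d_lt0 : mu1 - mu2 < 0 by rewrite subr_lt0.
have := crossing_factor 0 neq_mu; rewrite sub0r gtN sub0r sqrrN => phi0E.
have := crossing_factor L neq_mu; rewrite subrr => phiLE.
have c_lt : (k * L) ^+ 2 < D by nra.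
have D_lt : D < (L - k * L) ^+ 2 by nra.
have /andP[x0 xL] := sqrt_root_between L_gt0 c_lt D_lt.
apply: obj_crossing_unique_maximizer; first by rewrite !ltW.
apply/eqP; rewrite -subr_eq0 crossing_factor // (addrC (k * L)) addrK.
by rewrite sqr_sqrtr ?subrr ?mulr0 // (le_trans (sqr_ge0 _) (ltW c_lt)).
Qed.

Lemma obj_unique_maximizer_gt : mu2 < mu1 ->
  mu2 * gt h 0 < mu1 * gt h L -> mu1 * gt h 0 < mu2 * gt h L ->
  unique_maximizer (obj L h mu1 mu2) L (k * L - Num.sqrt D).
Proof.
move=> lt_mu phi0 phiL; have neq_mu : mu1 != mu2 by rewrite gt_eqF.
have d_gt0 : 0 < mu1 - mu2 by rewrite subr_gt0.
have := crossing_factor 0 neq_mu; rewrite sub0r gtN sub0r sqrrN => phi0E.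
have := crossing_factor L neq_mu; rewrite subrr => phiLE.
have Lc_lt : (L - k * L) ^+ 2 < D by nra.
have D_lt : D < (k * L) ^+ 2 by nra.
have /andP[x0 xL] := sqrt_root_between_rev L_gt0 Lc_lt D_lt.
apply: obj_crossing_unique_maximizer; first by rewrite !ltW.
apply/eqP; rewrite -subr_eq0 crossing_factor // (addrC (k * L)) addrK sqrrN.
by rewrite sqr_sqrtr ?subrr ?mulr0 // (le_trans (sqr_ge0 _) (ltW Lc_lt)).
Qed.

End Objective.

Theorem lemma3 (R : realType) (L h mu1 mu2 : R) :
  0 < L -> 0 < h -> 0 < mu1 -> 0 < mu2 ->
  let nu := h ^+ 2 / (L ^+ 2 + h ^+ 2) in
  let k := mu1 / (mu1 - mu2) in
  exists xs : R,
    unique_maximizer (obj L h mu1 mu2) L xs /\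
    [/\ (mu1 <= nu * mu2 -> xs = 0),
        (mu2 / nu <= mu1 -> xs = L),
        (mu1 = mu2 -> xs = L / 2),
        (nu * mu2 < mu1 < mu2 ->
           xs = k * L + Num.sqrt (k ^+ 2 * L ^+ 2 - k * L ^+ 2 - h ^+ 2)) &
        (mu2 < mu1 < mu2 / nu ->
           xs = k * L - Num.sqrt (k ^+ 2 * L ^+ 2 - k * L ^+ 2 - h ^+ 2))].
Proof.
move=> L0 h0 mu10 mu20 nu k.
rewrite [nu * mu2 < mu1]ltNge [mu1 < mu2 / nu]ltNge {}/nu le_nu_mulE // le_div_nuE //.
have g0 : 0 < gt h 0 by apply: gt_gt0.
have g0L : gt h 0 < gt h L by apply: gt_nneg_incr; rewrite ?lexx.
have [left|not_left] := leP (mu1 * gt h L) (mu2 * gt h 0).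
  exists 0; split; first by apply: obj_unique_maximizer_left.
  by split=> // [?|?|/andP[? ?]]; exfalso; nra.
have [right|not_right] := leP (mu2 * gt h L) (mu1 * gt h 0).
  exists L; split; first by apply: obj_unique_maximizer_right.
  by rewrite andbF; split=> //= [?|?]; exfalso; nra.
have [lt_mu|gt_mu|eq_mu] := ltgtP mu1 mu2.
- exists (k * L + Num.sqrt (k ^+ 2 * L ^+ 2 - k * L ^+ 2 - h ^+ 2)).
  split; first by apply: obj_unique_maximizer_lt.
  by split=> // ?; exfalso; lra.
- exists (k * L - Num.sqrt (k ^+ 2 * L ^+ 2 - k * L ^+ 2 - h ^+ 2)).
  split; first by apply: obj_unique_maximizer_gt.
  by split=> // ?; exfalso; lra.
- by exists (L / 2); split; first by apply: obj_unique_maximizer_mid.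
Qed.
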